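(* Let $q$ be a prime power and $r\ge1$ an integer with $(r+1)\mid(q+1)$. Let $s$ be an integer with $2\le s\le\frac{q+1}{r+1}$ and $1\le t\le s$. Then there exists an $\mathbb{F}_q$-linear code of length $n=s(r+1)+1$, dimension $k=rt$ and locality $r$ whose minimum distance $d$ satisfies $d\ge n-rt-t+1$.
   Context: A linear code $C\subseteq\mathbb{F}_q^n$ has locality $r$ if for every coordinate $i$ there is a set $I_i\subseteq\{1,\dots,n\}\setminus\{i\}$ with $|I_i|\le r$ such that any two codewords agreeing on the coordinates in $I_i$ also agree in coordinate $i$. *)

From HB Require Import structures.
From mathcomp Require Import all_boot all_order all_algebra all_field.
Set Implicit Arguments. Unset Strict Implicit. Unset Printing Implicit Defensive.
Import GRing.Theory.
Local Open Scope ring_scope.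

Definition hamming_dist (F : fieldType) (n : nat) (x y : 'rV[F]_n) : nat :=
  #|[set i : 'I_n | x 0 i != y 0 i]|.

Definition has_locality (F : fieldType) (n : nat) (C : {vspace 'rV[F]_n})
    (r : nat) : Prop :=
  forall i : 'I_n, exists I : {set 'I_n},
    [/\ i \notin I, (#|I| <= r)%N &
        forall c1 c2, c1 \in C -> c2 \in C ->
          (forall j, j \in I -> c1 0 j = c2 0 j) -> c1 0 i = c2 0 i].

Definition min_dist_ge (F : fieldType) (n : nat) (C : {vspace 'rV[F]_n})
    (m : nat) : Prop :=
  forall c1 c2, c1 \in C -> c2 \in C -> c1 != c2 -> (m <= hamming_dist c1 c2)%N.

From HB Require Import structures.
From mathcomp Require Import all_boot all_order all_algebra all_field.
From mathcomp Require Import zify ring cyclic.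
Set Implicit Arguments. Unset Strict Implicit. Unset Printing Implicit Defensive.
Import GRing.Theory.
Local Open Scope ring_scope.

(* Let L = F_(q^2) and let the n = s(r+1) evaluation points be s cosets of the
   subgroup of order r+1 inside the group of (q+1)-th roots of unity of L, which
   (r+1) | (q+1) makes possible.  A message x in F^(r*t) gives the polynomial
   Q = sum x_il X^(i + (r+1) l), and the codeword at a point a is the trace
   Tr_(L/F) (mu_a g Q(a)) for a primitive element g and a twist mu_a.  Since
   a^q = a^-1 on the unit circle, the twist makes the trace equal to mu_a P(a)
   for one polynomial P = g Q + g^q X^deg Q(1/X) of degree deg = t(r+1) - 2,
   which vanishes only if x = 0 because g^2 <> g^(2q).  So a nonzero codeword
   has at most deg zeros, which gives the distance.  On a coset, a^(r+1) = G is
   constant, and there P(a) agrees with a polynomial of degree < r in a, so the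
   value at any point of the coset is determined by the other r values. *)

Lemma card_root_set (R : idomainType) (T : finType) (p : {poly R}) (f : T -> R)
    (A : {pred T}) :
  p != 0 -> {in A &, injective f} -> {in A, forall a, root p (f a)} ->
  (#|A| < size p)%N.
Proof.
move=> p_neq0 f_inj rootA; rewrite cardE -(size_map f); apply: max_poly_roots => //.
  by apply/allP => _ /mapP[a Aa ->]; apply: rootA; rewrite -mem_enum.
by rewrite map_inj_in_uniq ?enum_uniq // => a b; rewrite !mem_enum; apply: f_inj.
Qed.

Lemma finField_prim_root (L : finFieldType) :
  exists g : L, #|L|.-1.-primitive_root g.
Proof.
have L_gt1 : (1 < #|L|)%N by exact: finNzRing_gt1.
have /hasP[g _ g_prim] : has #|L|.-1.-primitive_root (enum (predC1 (0 : L))).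
  apply: has_prim_root; rewrite ?enum_uniq -?cardE ?cardC1 //; first lia.
  apply/allP => x; rewrite mem_enum => /= x_neq0; rewrite unity_rootE.
  apply/eqP/(mulIf x_neq0); rewrite mul1r -exprSr prednK ?expf_card //.
  exact: ltnW (finNzRing_gt1 _).
by exists g.
Qed.

Section FrobeniusOverSubfield.
Variables (F : finFieldType) (L : fieldType) (iota : {rmorphism F -> L}).
Local Notation q := #|F|.

Lemma rmorph_card_exp c : iota c ^+ q = iota c.
Proof. by rewrite -rmorphXn expf_card. Qed.

Lemma exprD_card (x y : L) : (x + y) ^+ q = x ^+ q + y ^+ q.
Proof.
have [p _ pF] := finPcharP F; apply: exprDn_pchar.
rewrite (card_pprimeChar pF) (eq_pnat _ (pcharf_eq (rmorph_pchar iota pF))).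
by rewrite pnatX pnat_id ?(pcharf_prime pF) ?orbT.
Qed.

Lemma expr_card_sum (I : finType) (f : I -> L) :
  (\sum_i f i) ^+ q = \sum_i f i ^+ q.
Proof.
apply: (big_morph _ exprD_card).
by rewrite expr0n gtn_eqF // ltnW // finNzRing_gt1.
Qed.

Lemma fixed_card_exp_rmorph (y : L) : y ^+ q = y -> exists c, y = iota c.
Proof.
move=> yq; case: (pickP [pred c | y == iota c]) => [c /eqP-> | y_new].
  by exists c.
pose f (c : option F) := if c is Some c then iota c else y.
have q_gt1 : (1 < q)%N by exact: finNzRing_gt1.
have size_q : size ('X^q - 'X : {poly L}) = q.+1.
  by rewrite size_polyDl ?size_polyXn ?size_polyN ?size_polyX.
have : (#|{: option F}| < size ('X^q - 'X : {poly L})%R)%N.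
  apply: (@card_root_set _ _ _ f) => [||c _].
  - by rewrite -size_poly_gt0 size_q.
  - move=> [a|] [b|] _ _ /=; [by move/fmorph_inj->| | |by []].
      by move=> e; have := y_new a; rewrite /= e eqxx.
    by move=> e; have := y_new b; rewrite /= e eqxx.
  - rewrite rootE !hornerE.
    by case: c => [c|] /=; rewrite ?rmorph_card_exp ?yq subrr.
by rewrite card_option size_q ltnn.
Qed.
End FrobeniusOverSubfield.

Definition zero_set (F : fieldType) n (c : 'rV[F]_n) := [set i | c 0 i == 0].

Lemma hamming_dist_zero_set (F : fieldType) n (c1 c2 : 'rV[F]_n) :
  (hamming_dist c1 c2 + #|zero_set (c1 - c2)|)%N = n.
Proof.
transitivity #|'I_n|; last exact: card_ord.
rewrite -(cardsC (zero_set (c1 - c2))) addnC; congr (_ + _).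
by apply: eq_card => i; rewrite !inE !mxE subr_eq0.
Qed.

Lemma separable_Xpchar_sub_X (R : idomainType) p e :
  p \in [pchar R] -> (0 < e)%N -> separable_poly ('X^(p ^ e) - 'X : {poly R}).
Proof.
move=> pRp e_gt0; rewrite unlock derivB derivXn derivX.
rewrite -scaler_nat natrX pcharf0 // expr0n gtn_eqF // scale0r sub0r.
by rewrite -[X in coprimep _ X]scaleN1r coprimepZr ?oppr_eq0 ?oner_eq0 ?coprimep1.
Qed.

Lemma finField_ext_card_sqr (F : finFieldType) :
  exists (L : finFieldType) (iota : {rmorphism F -> L}), #|L| = (#|F| ^ 2)%N.
Proof.
have F_gt1 : (1 < #|F|)%N by exact: finNzRing_gt1.
pose m := (#|F| ^ 2)%N; have m_gt1 : (1 < m)%N by rewrite (ltn_exp2l 0).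
have [p _ pFp] := finPcharP F.
have Dm : m = (p ^ (logn p #|F| * 2))%N.
  by rewrite /m {1}(card_pprimeChar pFp) expnM.
have logF_gt0 : (0 < logn p #|F|)%N.
  by move: F_gt1; rewrite {1}(card_pprimeChar pFp); case: (logn p #|F|).
pose P (R : nzRingType) : {poly R} := 'X^m - 'X.
have size_P (R : nzRingType) : size (P R) = m.+1.
  by rewrite size_polyDl ?size_polyXn ?size_polyN ?size_polyX.
have /FinSplittingFieldFor[/= L splitLP] : P F != 0.
  by rewrite -size_poly_gt0 size_P.
rewrite [map_poly _ _]rmorphB rmorphXn /= map_polyX -/(P L) in splitLP.
have{splitLP} [zs DP defL] := splitLP.
have zs_uniq : uniq zs.
  rewrite -separable_prod_XsubC -(eqp_separable DP) /P Dm.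
  by rewrite separable_Xpchar_sub_X ?pchar_lalg // muln_gt0 logF_gt0.
have [a _ Da] := finField_galois_generator (sub1v {:L}).
rewrite dimv1 expn1 in Da.
have mem_zs z : (z \in zs) = (z \in fixedSpace (a ^+ 2)%g).
  rewrite -root_prod_XsubC -(eqp_root DP) (sameP fixedSpaceP eqP).
  rewrite /root !hornerE subr_eq0 /= expgS expg1 galM ?memvf //.
  by rewrite !Da ?memvf // -exprM mulnn.
have zs_full : fixedSpace (a ^+ 2)%g = {:L}%VS.
  apply/eqP; rewrite eqEsubv subvf -defL -[fixedSpace _]subfield_closed agenvS //.
  by rewrite subv_add sub1v; apply/span_subvP=> u; rewrite mem_zs.
exists (FinFieldExtType L), (in_alg L).
have [size_zs] : m.+1 = (size zs).+1.
  by rewrite -(size_P L) (eqp_size DP) size_prod_XsubC.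
have /eq_card-> : FinFieldExtType L =i zs by move=> z; rewrite mem_zs zs_full memvf.
by rewrite (card_uniqP _) -/m.
Qed.

Section LocallyRecoverableCode.
Variables (F L : finFieldType) (iota : {rmorphism F -> L}) (r s t : nat) (g : L).
Local Notation q := #|F|.
Local Notation n := (s * r.+1)%N.
Local Notation m := (q.+1 %/ r.+1)%N.
Local Notation deg := (t * r.+1 - 2)%N.
Hypotheses (cardL : #|L| = (q ^ 2)%N) (r_gt0 : (0 < r)%N)
  (r1_dvd_q1 : (r.+1 %| q.+1)%N) (n_le_q1 : (n <= q.+1)%N)
  (t_gt0 : (0 < t)%N) (t_le_s : (t <= s)%N)
  (g_prim : (q ^ 2).-1.-primitive_root g).

Local Notation index := ('I_r * 'I_t)%type.

Definition trace (y : L) := y + y ^+ q.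

Definition omega := g ^+ q.-1.

Definition point_exp k := (k %/ r.+1 + k %% r.+1 * m)%N.

Definition point k := omega ^+ point_exp k.

Definition twist k := g ^+ (point_exp k * deg).

Definition mono_exp (il : index) := (il.1 + r.+1 * il.2)%N.

Definition mono_dual (il : index) : index := (rev_ord il.1, rev_ord il.2).

Definition msg (x : 'M[F]_(r, t)) (il : index) := iota (x il.1 il.2).

Definition msg_val x (w : L) := \sum_il msg x il * w ^+ mono_exp il.

Definition coord x k := trace (twist k * g * msg_val x (point k)).

Definition msg_coef x il := g * msg x il + g ^+ q * msg x (mono_dual il).

Definition msg_poly x : {poly L} := \sum_il msg_coef x il *: 'X^(mono_exp il).

Definition block_poly x (G : L) : {poly L} :=
  \sum_(il : index) (msg_coef x il * G ^+ il.2) *: 'X^(il.1).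

Lemma q_gt1 : (1 < q)%N. Proof. exact: finNzRing_gt1. Qed.

Lemma expr_card_sqr (y : L) : y ^+ (q ^ 2) = y.
Proof. by rewrite -cardL expf_card. Qed.

Lemma trace_rmorph y : exists c, trace y = iota c.
Proof.
apply: fixed_card_exp_rmorph.
by rewrite /trace (exprD_card iota) -exprM mulnn expr_card_sqr addrC.
Qed.

Lemma trace_semilinear a u v : trace (iota a * u + v) = iota a * trace u + trace v.
Proof. by rewrite /trace (exprD_card iota) exprMn rmorph_card_exp; ring. Qed.

Lemma coord_semilinear a x y k :
  coord (a *: x + y) k = iota a * coord x k + coord y k.
Proof.
rewrite /coord -trace_semilinear /msg_val !mulr_sumr -big_split /=; congr trace.
apply: eq_bigr => il _.
by rewrite /msg !mxE rmorphD rmorphM /=; ring.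
Qed.

Lemma q2_pred : ((q ^ 2).-1 = q.-1 * q.+1)%N.
Proof. by have := q_gt1; case: q => // p _; rewrite expnS expn1; lia. Qed.

Lemma g_neq0 : g != 0.
Proof.
apply/eqP => g0; have := prim_expr_order g_prim; rewrite g0 expr0n q2_pred.
by have := q_gt1; case: q => [|[|p]] //= _ /eqP; rewrite eq_sym oner_eq0.
Qed.

Lemma omega_prim : q.+1.-primitive_root omega.
Proof.
have q1_dvd : (q.+1 %| (q ^ 2).-1)%N by rewrite q2_pred dvdn_mull.
by have := dvdn_prim_root g_prim q1_dvd; rewrite q2_pred mulnK.
Qed.

Lemma point_expr_q1 k : point k ^+ q.+1 = 1.
Proof.
by rewrite /point -exprM mulnC exprM (prim_expr_order omega_prim) expr1n.
Qed.

Lemma point_neq0 k : point k != 0.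
Proof. by rewrite /point /omega -exprM expf_neq0 // g_neq0. Qed.

Lemma twist_neq0 k : twist k != 0.
Proof. by rewrite /twist expf_neq0 // g_neq0. Qed.

Lemma twist_expr_card k : twist k ^+ q = twist k * point k ^+ deg.
Proof.
rewrite /twist /point /omega -!exprM -exprD; congr (g ^+ _).
by have := q_gt1; case: q => // p _ /=; lia.
Qed.

Lemma mono_exp_le il : (mono_exp il <= deg)%N.
Proof.
by case: il => i l; rewrite /mono_exp /=; have := ltn_ord i; have := ltn_ord l; nia.
Qed.

Lemma mono_exp_dual il : mono_exp (mono_dual il) = (deg - mono_exp il)%N.
Proof.
by case: il => i l; rewrite /mono_exp /=; have := ltn_ord i; have := ltn_ord l; nia.
Qed.

Lemma mono_dualK : involutive mono_dual.
Proof. by case=> i l; rewrite /mono_dual /= !rev_ordK. Qed.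

(* The twist is chosen so that the Frobenius image of [twist k * w ^+ a] is
   [twist k * w ^+ (deg - a)]: the trace becomes a polynomial of degree [deg]. *)
Lemma trace_twist k a : (a <= deg)%N ->
  (twist k * point k ^+ a) ^+ q = twist k * point k ^+ (deg - a).
Proof.
move=> a_le; apply: (mulIf (expf_neq0 a (point_neq0 k))).
have unit_circle : (point k ^+ a) ^+ q * point k ^+ a = 1.
  by rewrite -exprSr -exprM mulnC exprM point_expr_q1 expr1n.
by rewrite exprMn twist_expr_card -!mulrA unit_circle mulr1 -exprD subnK.
Qed.

Lemma coord_msg_poly x k : coord x k = twist k * (msg_poly x).[point k].
Proof.
rewrite /coord.
have -> : twist k * g * msg_val x (point k) =
    \sum_il g * msg x il * (twist k * point k ^+ mono_exp il).
  by rewrite /msg_val !mulr_sumr; apply: eq_bigr => il _; ring.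
rewrite /trace (expr_card_sum iota).
under [X in _ + X]eq_bigr => il _.
  rewrite exprMn [(g * _) ^+ _]exprMn /msg rmorph_card_exp.
  rewrite trace_twist ?mono_exp_le // -mono_exp_dual.
  over.
rewrite [X in _ + X](reindex_inj (inv_inj mono_dualK)) /= -big_split.
rewrite /msg_poly horner_sum mulr_sumr.
apply: eq_bigr => il _ /=; rewrite hornerZ hornerXn /msg_coef /msg mono_dualK; ring.
Qed.

Lemma size_msg_poly x : (size (msg_poly x) <= deg.+1)%N.
Proof.
apply: leq_trans (size_sum _ _ _) _; apply/bigmax_leqP => il _.
by apply: leq_trans (size_scale_leq _ _) _; rewrite size_polyXn ltnS mono_exp_le.
Qed.

Lemma size_block_poly x G : (size (block_poly x G) <= r)%N.
Proof.
apply: leq_trans (size_sum _ _ _) _; apply/bigmax_leqP => il _.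
by apply: leq_trans (size_scale_leq _ _) _; rewrite size_polyXn.
Qed.

Lemma block_poly_horner x G w :
  w ^+ r.+1 = G -> (block_poly x G).[w] = (msg_poly x).[w].
Proof.
move=> wG; rewrite !horner_sum; apply: eq_bigr => il _.
by rewrite !hornerZ !hornerXn /mono_exp exprD exprM wG; ring.
Qed.

Lemma mono_exp_mod il : (mono_exp il %% r.+1 = il.1)%N.
Proof. by rewrite /mono_exp mulnC addnC modnMDl modn_small // ltnS ltnW. Qed.

Lemma mono_exp_div il : (mono_exp il %/ r.+1 = il.2)%N.
Proof.
by rewrite /mono_exp mulnC addnC divnMDl // divn_small ?addn0 // ltnS ltnW.
Qed.

Lemma mono_exp_inj : injective mono_exp.
Proof.
move=> [i l] [i' l'] eq_exp.
have := mono_exp_mod (i, l); have := mono_exp_div (i, l).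
by rewrite eq_exp mono_exp_mod mono_exp_div /= => /val_inj-> /val_inj->.
Qed.

Lemma coef_msg_poly x il : (msg_poly x)`_(mono_exp il) = msg_coef x il.
Proof.
by rewrite coef_sumMXn (big_pred1 il) // => il'; rewrite /= (inj_eq mono_exp_inj).
Qed.

Lemma g_sqr_neq : g ^+ 2 != (g ^+ q) ^+ 2.
Proof.
have q_gt1 := q_gt1.
have two_le : (2 <= q * 2)%N by lia.
have small : (0 < q * 2 - 2 < (q ^ 2).-1)%N by rewrite q2_pred; nia.
rewrite -exprM (eq_prim_root_expr g_prim) eq_sym eqn_mod_dvd //.
case/andP: small => pos lt; apply/negP => /(dvdn_leq pos).
by rewrite leqNgt lt.
Qed.

Lemma msg_poly_eq0 x : msg_poly x = 0 -> x = 0.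
Proof.
move=> x0; apply/matrixP => i l; rewrite mxE; apply: (fmorph_inj iota).
have := coef_msg_poly x (i, l); have := coef_msg_poly x (mono_dual (i, l)).
rewrite x0 /msg_coef mono_dualK !coef0 rmorph0 /msg /=.
set c := iota (x i l); set c' := iota _ => e1 e2.
have : (g ^+ 2 - (g ^+ q) ^+ 2) * c =
    g * (g * c + g ^+ q * c') - g ^+ q * (g * c' + g ^+ q * c) by ring.
rewrite -e1 -e2 !mulr0 subr0 => /eqP.
by rewrite mulf_eq0 subr_eq0 (negbTE g_sqr_neq) => /eqP.
Qed.

Lemma m_r1 : (m * r.+1 = q.+1)%N.
Proof. exact: divnK. Qed.

Lemma s_le_m : (s <= m)%N.
Proof. by rewrite -(leq_pmul2r (ltn0Sn r)) m_r1. Qed.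

Lemma block_lt_m k : (k < n)%N -> (k %/ r.+1 < m)%N.
Proof. by rewrite -ltn_divLR // => /leq_trans; apply; apply: s_le_m. Qed.

Lemma point_exp_lt k : (k < n)%N -> (point_exp k < q.+1)%N.
Proof.
move=> /block_lt_m; rewrite -m_r1 /point_exp.
have : (k %% r.+1 < r.+1)%N by rewrite ltn_mod.
nia.
Qed.

Lemma point_exp_mod k : (k < n)%N -> (point_exp k %% m = k %/ r.+1)%N.
Proof. by move=> /block_lt_m lt_m; rewrite /point_exp addnC modnMDl modn_small. Qed.

Lemma point_exp_div k : (k < n)%N -> (point_exp k %/ m = k %% r.+1)%N.
Proof.
move=> /block_lt_m lt_m; have m_gt0 : (0 < m)%N by apply: leq_ltn_trans lt_m.
by rewrite /point_exp addnC divnMDl // divn_small ?addn0.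
Qed.

Lemma point_inj k k' : (k < n)%N -> (k' < n)%N -> point k = point k' -> k = k'.
Proof.
move=> lt_k lt_k' /eqP; rewrite (eq_prim_root_expr omega_prim).
rewrite !modn_small ?point_exp_lt // => /eqP eq_exp.
rewrite (divn_eq k r.+1) (divn_eq k' r.+1).
rewrite -(point_exp_mod lt_k) -(point_exp_div lt_k) eq_exp.
by rewrite point_exp_mod ?point_exp_div.
Qed.

(* Points in the same block of [r.+1] consecutive coordinates form a coset of
   the subgroup of order [r.+1]: they share their [r.+1]-th power. *)
Lemma point_expr_block k : point k ^+ r.+1 = omega ^+ (k %/ r.+1 * r.+1).
Proof.
rewrite /point /point_exp -exprM mulnDl exprD -mulnA m_r1 [(_ * q.+1)%N]mulnC.
by rewrite [omega ^+ (q.+1 * _)]exprM (prim_expr_order omega_prim) expr1n mulr1.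
Qed.

Definition iota_inv (y : L) : F := odflt 0 [pick c | iota c == y].

Lemma iota_inv_trace y : iota (iota_inv (trace y)) = trace y.
Proof.
rewrite /iota_inv; case: pickP => [c /eqP // | no_pre].
by have [c trace_c] := trace_rmorph y; have := no_pre c; rewrite /= trace_c eqxx.
Qed.

(* The last coordinate is identically zero: it only pads the length to n + 1. *)
Definition encode x : 'rV[F]_n.+1 :=
  \row_(k < n.+1) if (k < n)%N then iota_inv (coord x k) else 0.

Lemma rmorph_encode x (k : 'I_n.+1) :
  iota (encode x 0 k) = if (k < n)%N then coord x k else 0.
Proof. by rewrite mxE; case: ifP; rewrite ?rmorph0 ?iota_inv_trace. Qed.

Lemma encode_is_linear : linear encode.
Proof.
move=> a x y; apply/rowP => k; apply: (fmorph_inj iota).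
have -> : (a *: encode x + encode y) 0 k = a * encode x 0 k + encode y 0 k.
  by rewrite !mxE.
rewrite rmorphD rmorphM /= !rmorph_encode.
by case: ifP => _; rewrite ?coord_semilinear ?mulr0 ?addr0.
Qed.

HB.instance Definition _ :=
  GRing.isLinear.Build F 'M[F]_(r, t) 'rV[F]_n.+1 _ encode encode_is_linear.

Lemma encodeB x y : encode (x - y) = encode x - encode y.
Proof. exact: linearB. Qed.

Lemma encode_eq0 x (k : 'I_n.+1) :
  (encode x 0 k == 0) = (k < n)%N ==> root (msg_poly x) (point k).
Proof.
rewrite -(fmorph_eq0 iota) rmorph_encode; case: ifP; rewrite ?eqxx //.
by rewrite coord_msg_poly mulf_eq0 (negbTE (twist_neq0 k)).
Qed.

Lemma card_zero_set_encode x : x != 0 -> (#|zero_set (encode x)| <= deg.+1)%N.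
Proof.
move=> x_neq0.
set Z := [set k : 'I_n.+1 | (k < n)%N && root (msg_poly x) (point k)].
have Z_lt : (#|Z| < size (msg_poly x))%N.
  apply: card_root_set => [|k k'|k]; rewrite ?inE.
  - by apply: contra x_neq0 => /eqP/msg_poly_eq0->.
  - by case/andP=> lt_k _ /andP[lt_k' _] /(point_inj lt_k lt_k') /val_inj.
  - by case/andP.
have zeros_sub : zero_set (encode x) \subset ord_max |: Z.
  apply/subsetP => k; rewrite !inE encode_eq0; case: ltnP => [_ /= -> | le_k _].
    by rewrite orbT.
  by apply/orP; left; apply/eqP/val_inj/eqP; rewrite /= eqn_leq le_k andbT -ltnS.
apply: leq_trans (subset_leq_card zeros_sub) _; rewrite cardsU1.
apply: (leq_add (leq_b1 _)); rewrite -ltnS.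
exact: leq_trans Z_lt (size_msg_poly x).
Qed.

Definition block_index k (j : 'I_r.+1) : 'I_n.+1 := inord (k %/ r.+1 * r.+1 + j).

Definition recovery_set k := block_index k @: [set~ inord (k %% r.+1)].

Lemma block_lt k (j : 'I_r.+1) : (k < n)%N -> (k %/ r.+1 * r.+1 + j < n)%N.
Proof. by rewrite -ltn_divLR // => lt_s; have := ltn_ord j; nia. Qed.

Lemma val_block_index k j :
  (k < n)%N -> block_index k j = (k %/ r.+1 * r.+1 + j)%N :> nat.
Proof. by move=> lt_k; rewrite inordK // ltnS ltnW // block_lt. Qed.

Lemma block_index_lt k j : (k < n)%N -> (block_index k j < n)%N.
Proof. by move=> lt_k; rewrite val_block_index // block_lt. Qed.

Lemma block_index_inj k : (k < n)%N -> injective (block_index k).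
Proof.
move=> lt_k j j' /(congr1 (@nat_of_ord _)).
by rewrite !val_block_index // => /addnI /val_inj.
Qed.

Lemma block_index_mod (k : 'I_n.+1) :
  (k < n)%N -> block_index k (inord (k %% r.+1)) = k.
Proof.
move=> lt_k; apply/val_inj.
by rewrite /= val_block_index // inordK ?ltn_mod // -divn_eq.
Qed.

Lemma point_block_index k j : (k < n)%N ->
  point (block_index k j) ^+ r.+1 = point k ^+ r.+1.
Proof.
move=> lt_k; rewrite !point_expr_block val_block_index // divnMDl //.
by rewrite (divn_small (ltn_ord j)) addn0.
Qed.

Lemma encode_recovery x (k : 'I_n.+1) : (k < n)%N ->
  {in recovery_set k, forall i, encode x 0 i = 0} -> encode x 0 k = 0.
Proof.
move=> lt_k rec0; apply/eqP; rewrite encode_eq0 lt_k /=.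
pose f j := point (block_index k j).
pose A : {set 'I_r.+1} := [set~ inord (k %% r.+1)].
suff block0 : block_poly x (point k ^+ r.+1) = 0.
  by rewrite rootE -(block_poly_horner x erefl) block0 horner0.
apply/eqP; apply: contraT => nz; have := @card_root_set _ _ _ f A nz.
rewrite cardsC1 card_ord ltnNge size_block_poly /=; apply.
  move=> j j' _ _ /(point_inj (block_index_lt j lt_k) (block_index_lt j' lt_k)).
  by move/val_inj/(block_index_inj lt_k).
move=> j Aj; rewrite rootE /f block_poly_horner ?point_block_index //.
have := rec0 _ (imset_f (block_index k) Aj); move/eqP.
by rewrite encode_eq0 block_index_lt.
Qed.

Lemma deg_lt_n : (deg < n)%N.
Proof. by have := leq_mul t_le_s (leqnn r.+1); nia. Qed.

Lemma encode_inj : injective encode.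
Proof.
move=> x y exy; apply/eqP; rewrite -subr_eq0.
apply: contraT => /card_zero_set_encode.
have -> : zero_set (encode (x - y)) = setT.
  by apply/setP => k; rewrite !inE encodeB exy subrr mxE eqxx.
by rewrite cardsT card_ord ltnS leqNgt deg_lt_n.
Qed.

Definition lrc := limg (linfun encode).

Lemma lrc_encode c : c \in lrc -> exists x, c = encode x.
Proof. by case/memv_imgP => x _ ->; exists x; rewrite lfunE. Qed.

Lemma dim_lrc : \dim lrc = (r * t)%N.
Proof.
rewrite limg_dim_eq ?dimvf //; apply/eqP; rewrite capfv; apply/lker0P.
by move=> x y; rewrite !lfunE; apply: encode_inj.
Qed.

Lemma lrc_locality : has_locality lrc r.
Proof.
move=> k; have [lt_k | le_k] := ltnP k n; last first.
  exists set0; rewrite inE cards0.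
  split=> // _ _ /lrc_encode[x ->] /lrc_encode[y ->] _.
  by rewrite !mxE ltnNge le_k.
exists (recovery_set k); split.
- apply/imsetP => -[j]; rewrite in_setC1 => /negP j_ne k_eq; apply: j_ne.
  by apply/eqP/(block_index_inj lt_k); rewrite block_index_mod.
- by apply: leq_trans (leq_imset_card _ _) _; rewrite cardsC1 card_ord.
- move=> _ _ /lrc_encode[x ->] /lrc_encode[y ->] agree.
  apply/eqP; rewrite -subr_eq0.
  have := encode_recovery (x := x - y) lt_k; rewrite encodeB !mxE => -> // i /agree.
  by move=> e; rewrite mxE [X in _ + X]mxE e subrr.
Qed.

Lemma lrc_min_dist : min_dist_ge lrc (n.+1 - r * t - t + 1).
Proof.
move=> _ _ /lrc_encode[x ->] /lrc_encode[y ->] exy.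
have x_neq_y : x - y != 0 by rewrite subr_eq0; apply: contraNneq exy => ->.
have := hamming_dist_zero_set (encode x) (encode y).
have := card_zero_set_encode x_neq_y; rewrite encodeB.
have := deg_lt_n; set z := #|_|; set h := hamming_dist _ _; nia.
Qed.

End LocallyRecoverableCode.

Theorem mainTheorem5 (F : finFieldType) (q r s t : nat) :
  #|F| = q ->
  (1 <= r)%N ->
  (r.+1 %| q.+1)%N ->
  (2 <= s)%N -> (s * r.+1 <= q.+1)%N ->
  (1 <= t <= s)%N ->
  exists C : {vspace 'rV[F]_(s * r.+1).+1},
    [/\ \dim C = (r * t)%N,
        has_locality C r &
        min_dist_ge C ((s * r.+1).+1 - r * t - t + 1)%N].
Proof.
move=> <- r_gt0 r1_dvd_q1 _ n_le_q1 /andP[t_gt0 t_le_s].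
have [L [iota cardL]] := finField_ext_card_sqr F.
have [g] := finField_prim_root L; rewrite cardL => g_prim.
exists (lrc iota r s t g); split.
- exact: dim_lrc.
- exact: lrc_locality.
- exact: lrc_min_dist.
Qed.
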